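(* Let $N$ be a node and let $f_N^{1}\le f_N^{2}\le\dots\le f_N^{|\Gamma|}$ be the ordered list of the scan periods set for $N$ by the monitors $M_1,\dots,M_{|\Gamma|}$. Then the longest time frame during which an error concerning a connection of $N$ (a connection $N\to P$ present in $E$ but absent from $E_{AToM}$, or vice versa) can exist in the global snapshot $G_{AToM}$ is $f_N^{\lfloor|\Gamma|/2\rfloor+1}$.
   Context: The network is a directed graph $G=(V,E)$ of nodes that changes over time ($N\to P$ denotes $(N,P)\in E$); $\Gamma$ is a set of monitors. Each monitor $M_i$ repeatedly executes a verification round $PeeV(N)$ for each node $N$, treated as an atomic event, which updates its local snapshot $E_{M_i}$ so that immediately after the round, $(N,P)\in E_{M_i}$ iff $(N,P)\in E$ for all $P$; consecutive rounds of $M_i$ for $N$ are separated by the scan period $f_N^{i}$. Between rounds, $E_{M_i}$ is not modified for connections of $N$. The global snapshot is $G_{AToM}=(V,E_{AToM})$ with $E_{AToM}=\{(A,B):|\{M\in\Gamma:(A,B)\in E_M\}|>|\Gamma|/2\}$, i.e. a connection is included iff it is in the local snapshots of a strict majority of monitors. *)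

From HB Require Import structures.
From mathcomp Require Import all_boot all_order all_algebra.
From mathcomp Require Import reals.
Set Implicit Arguments. Unset Strict Implicit. Unset Printing Implicit Defensive.
Import Order.TTheory GRing.Theory Num.Theory.
Local Open Scope ring_scope.

(* Model (time is real-valued, R : realType).
   - monitors are indexed by 'I_m (m = |Gamma|);
   - f i > 0 : scan period of monitor i for the fixed node N;
   - phi i  : phase of monitor i; the verification rounds PeeV(N) of monitor i
              happen exactly at the times phi i + z * f i, z : int;
   - E : R -> rel V : the (time-varying) true connection relation;
   - the local snapshot of monitor i at time t for a connection (N,P) equals
     E s N P where s is the time of the last round of i at or before t. *)

Section AToM.
Variables (R : realType) (V : Type) (m : nat).

Definition last_round (ph p t : R) : R :=
  ph + (Num.floor ((t - ph) / p))%:~R * p.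

Definition local_snap (E : R -> rel V) (phi f : 'I_m -> R) (i : 'I_m)
  (t : R) (N P : V) : bool :=
  E (last_round (phi i) (f i) t) N P.

Definition in_AToM (E : R -> rel V) (phi f : 'I_m -> R) (t : R) (N P : V)
  : bool :=
  (m < 2 * #|[set i : 'I_m | local_snap E phi f i t N P]|)%N.

Definition atom_error (E : R -> rel V) (phi f : 'I_m -> R) (t : R) (N P : V)
  : bool :=
  in_AToM E phi f t N P != E t N P.

(* the (floor(m/2)+1)-th smallest scan period, i.e. f_N^{floor(|Gamma|/2)+1}
   in the ordered list f_N^1 <= ... <= f_N^{|Gamma|} *)
Definition kth_period (f : 'I_m -> R) : R :=
  nth 0 (sort <=%R [seq f i | i <- enum 'I_m]) m./2.

End AToM.

From HB Require Import structures.
From mathcomp Require Import all_boot all_order all_algebra.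
From mathcomp Require Import reals zify lra.
Import Order.TTheory GRing.Theory Num.Theory.
Set Implicit Arguments. Unset Strict Implicit. Unset Printing Implicit Defensive.
Local Open Scope ring_scope.

(* During an error interval (a, b) the verdict of the global snapshot at any time s
   is the negation of E s, which is exactly what a monitor doing a round at s records.
   So a monitor whose snapshot changes at time u votes against the verdict at u, and
   the verdict can never flip; by induction on the number of rounds in between, it is
   constant on (a, b).  If b - a exceeded the
   (floor(m/2)+1)-th smallest period F, then the monitors with period at most F, a
   strict majority, would all have done a round inside (a, b) by some time T, all
   voting against the constant verdict: a contradiction.  Conversely, if all monitors
   scan in phase at time 0, a connection present exactly during (0, F) is never seen
   by the monitors with period at least F, which are at least half of them. *)

Section OrderStatistic.
Context {d : Order.disp_t} {T : orderType d} (x0 : T) (s : seq T).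
Hypothesis s_sorted : sorted <=%O s.

Lemma count_lt_nth_sorted k : (count (fun x => x < nth x0 s k)%O s <= k)%N.
Proof.
have [lt_k_s|] := ltnP k (size s); last by apply: leq_trans (count_size _ _).
set y := nth x0 s k.
have /allP drop_ge : all (>= y)%O (drop k s).
  have := drop_sorted k s_sorted; rewrite (drop_nth x0 lt_k_s) /= => path_s.
  by rewrite /= lexx (order_path_min le_trans path_s).
rewrite -(cat_take_drop k s) count_cat (@eq_in_count _ _ pred0 (drop k s)).
  by rewrite count_pred0 addn0 (leq_trans (count_size _ _)) // size_take_min geq_minl.
by move=> x /drop_ge /= le_yx; rewrite ltNge le_yx.
Qed.

Lemma count_le_nth_sorted k : (k < size s)%N ->
  (k < count (fun x => x <= nth x0 s k)%O s)%N.
Proof.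
move=> lt_k_s; set y := nth x0 s k.
have size_take_k : size (take k.+1 s) = k.+1 by rewrite size_take_min (minn_idPl lt_k_s).
have : all (<= y)%O (take k.+1 s).
  apply/(all_nthP x0) => j; rewrite size_take_k => lt_j_k.
  rewrite nth_take //; apply: (sorted_leq_nth le_trans lexx x0 s_sorted) => //;
    rewrite inE; exact: leq_trans lt_k_s.
rewrite all_count size_take_k => /eqP count_take.
by rewrite -(cat_take_drop k.+1 s) count_cat count_take leq_addr.
Qed.

End OrderStatistic.

Definition majority {m : nat} (v : pred 'I_m) : bool :=
  (m < 2 * #|[set i | v i]|)%N.

Section Majority.
Variable m : nat.
Implicit Types v w : pred 'I_m.

Lemma majority_sub v w : (forall i, v i -> w i) -> majority v -> majority w.
Proof.
move=> sub_vw; rewrite /majority => /leq_trans; apply; rewrite leq_mul2l /=.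
by apply: subset_leq_card; apply/subsetP => i; rewrite !inE => /sub_vw.
Qed.

Lemma majority_disjoint v w : (forall i, v i -> ~~ w i) ->
  majority v -> ~~ majority w.
Proof.
move=> vNw maj_v; rewrite /majority -leqNgt.
have : [set i | w i] \subset ~: [set i | v i].
  by apply/subsetP => i; rewrite !inE; apply: contraL => /vNw.
move/subset_leq_card; have := cardsC [set i | v i]; rewrite card_ord.
move: maj_v; rewrite /majority; lia.
Qed.

Lemma majority_agree (K : pred 'I_m) v c : majority K ->
  (forall i, K i -> v i = c) -> majority v = c.
Proof.
move=> maj_K vK; case: c vK => vK.
  by apply: majority_sub maj_K => i /vK ->.
by apply/negbTE; apply: majority_disjoint maj_K => i /vK ->.
Qed.

(* Voters that change their mind only move against the new outcome, so the outcome
   cannot change. *)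
Lemma majority_update v w :
  (forall i, w i = v i \/ w i = ~~ majority w) -> majority w = majority v.
Proof.
move=> upd; case maj_w: (majority w); apply/esym.
  apply: (majority_sub _ maj_w) => i w_i.
  by case: (upd i) => [<- //|]; rewrite maj_w w_i.
apply/negbTE; apply: (contraFN _ maj_w); apply: majority_sub => i v_i.
by case: (upd i) => ->; rewrite ?maj_w.
Qed.

End Majority.

Lemma in_AToME (R : realType) (V : Type) (m : nat) (E : R -> rel V)
    (phi f : 'I_m -> R) t N P :
  in_AToM E phi f t N P = majority (fun i => local_snap E phi f i t N P).
Proof. by []. Qed.

Lemma card_count_sort {R : realType} {m} (f : 'I_m -> R) (p : pred R) :
  #|[set i | p (f i)]| = count p (sort <=%R [seq f i | i <- enum 'I_m]).
Proof.
by rewrite count_sort count_map cardsE cardE /enum_mem size_filter filter_predT.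
Qed.

Section KthPeriod.
Variables (R : realType) (m : nat) (f : 'I_m -> R).

Lemma majority_le_kth_period : (0 < m)%N -> majority (fun i => f i <= kth_period f).
Proof.
move=> m_gt0; rewrite /majority (card_count_sort f (<= kth_period f)).
apply: (@leq_trans (2 * (m./2).+1)); first lia.
rewrite leq_mul2l /=; apply: count_le_nth_sorted; first exact/sort_sorted/le_total.
by rewrite size_sort size_map size_enum_ord; lia.
Qed.

Lemma minority_lt_kth_period : ~~ majority (fun i => f i < kth_period f).
Proof.
rewrite /majority (card_count_sort f (< kth_period f)) -leqNgt.
apply: (@leq_trans (2 * m./2)); last lia.
by rewrite leq_mul2l /=; apply/count_lt_nth_sorted/sort_sorted/le_total.
Qed.

End KthPeriod.

Section Clock.
Variables (R : realType) (ph p : R).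
Hypothesis p_gt0 : 0 < p.

Definition round_index (t : R) : int := Num.floor ((t - ph) / p).

Lemma last_roundE t : last_round ph p t = ph + (round_index t)%:~R * p.
Proof. by []. Qed.

Lemma last_round_le t : last_round ph p t <= t.
Proof. by rewrite last_roundE -lerBrDl -ler_pdivlMr // floor_le. Qed.

Lemma lt_last_round_period t : t < last_round ph p t + p.
Proof.
have := floorD1_gt ((t - ph) / p).
rewrite -/(round_index t) intrD ltr_pdivrMr // mulrDl mul1r last_roundE; lra.
Qed.

Lemma le_round_index : {homo round_index : t t' / t <= t'}.
Proof.
by move=> t t' le_tt'; apply: le_floor; rewrite ler_pM2r ?invr_gt0 // lerD2r.
Qed.

Lemma le_last_round : {homo last_round ph p : t t' / t <= t'}.
Proof.
move=> t t' /le_round_index le_idx.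
by rewrite !last_roundE lerD2l ler_pM2r // ler_int.
Qed.

Lemma round_index_next t : round_index (last_round ph p t + p) = round_index t + 1.
Proof.
rewrite {1}/round_index last_roundE.
have -> : ph + (round_index t)%:~R * p + p - ph = (round_index t + 1)%:~R * p.
  by rewrite intrD mulrDl mul1r; lra.
by rewrite mulfK ?gt_eqF // intrKfloor.
Qed.

Lemma last_round_next t :
  last_round ph p (last_round ph p t + p) = last_round ph p t + p.
Proof. by rewrite [LHS]last_roundE round_index_next intrD mulrDl mul1r addrA. Qed.

Lemma last_round_stable t t' : t <= t' < last_round ph p t + p ->
  last_round ph p t' = last_round ph p t.
Proof.
move=> /andP[le_tt' lt_t'_next]; rewrite !last_roundE; congr (_ + _ * _).
congr intr; apply: floor_def; apply/andP; split.
  by apply: le_trans (floor_le _); rewrite ler_int le_round_index.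
by rewrite intrD ltr_pdivrMr // mulrDl mul1r ltrBlDl addrA -last_roundE.
Qed.

Lemma last_round_phase t : ph <= t < ph + p -> last_round ph p t = ph.
Proof.
have last_round_ph : last_round ph p ph = ph.
  by rewrite last_roundE /round_index subrr mul0r floor0 mul0r addr0.
move=> t_range; rewrite -[RHS]last_round_ph.
by apply: last_round_stable; rewrite last_round_ph.
Qed.

End Clock.

Section Monitors.
Variables (R : realType) (m : nat) (f phi : 'I_m -> R).

Local Notation L i := (last_round (phi i) (f i)).
Local Notation idx i := (round_index (phi i) (f i)).

Definition rounds_between (t t' : R) : int := \sum_i (idx i t' - idx i t).

Lemma rounds_betweenD t u t' :
  rounds_between t t' = rounds_between t u + rounds_between u t'.
Proof.
by rewrite /rounds_between -big_split; apply: eq_bigr => i _ /=; lia.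
Qed.

Hypothesis f_gt0 : forall i, 0 < f i.

Lemma rounds_between_ge0 t t' : t <= t' -> 0 <= rounds_between t t'.
Proof.
by move=> le_tt'; apply: sumr_ge0 => i _; rewrite subr_ge0 le_round_index.
Qed.

Hypothesis m_gt0 : (0 < m)%N.

Lemma next_event t : exists2 u, t < u &
  [/\ forall i, L i u = L i t \/ L i u = u,
      forall t' i, t <= t' < u -> L i t' = L i t
    & 0 < rounds_between t u].
Proof.
case: (arg_minP (fun i => L i t + f i) (isT : predT (Ordinal m_gt0))) => j _ j_min.
set u := L j t + f j.
have lt_tu : t < u by exact: lt_last_round_period.
have u_le i : u <= L i t + f i by exact: j_min.
exists u => //; split.
- move=> i; have [lt_u|eq_u] := ltP u (L i t + f i); last first.
    right; have -> : u = L i t + f i by apply/le_anti; rewrite u_le eq_u.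
    exact: last_round_next.
  by left; apply: last_round_stable => //; rewrite (ltW lt_tu).
- move=> t' i /andP[le_tt' lt_t'u]; apply: last_round_stable => //.
  by rewrite le_tt' (lt_le_trans lt_t'u (u_le i)).
- rewrite /rounds_between (bigD1 j) //= round_index_next // [_ + 1 - _]addrC addKr.
  apply: ltr_wpDr => //; apply: sumr_ge0 => i _.
  by rewrite subr_ge0 le_round_index // ltW.
Qed.

End Monitors.

Section ErrorInterval.
Variables (R : realType) (V : Type) (m : nat) (f phi : 'I_m -> R).
Variables (E : R -> rel V) (N P : V) (a b : R).
Hypothesis f_gt0 : forall i, 0 < f i.
Hypothesis m_gt0 : (0 < m)%N.
Hypothesis error : forall t, a < t < b -> atom_error E phi f t N P.

Local Notation L i := (last_round (phi i) (f i)).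
Local Notation h t := (in_AToM E phi f t N P).

Lemma error_flip t : a < t < b -> E t N P = ~~ h t.
Proof. by move/error; rewrite /atom_error; case: (E t N P); case: (h t). Qed.

Lemma in_AToM_update s u : a < u < b ->
  (forall i, L i u = L i s \/ L i u = u) -> h s = h u.
Proof.
move=> u_in upd; rewrite !in_AToME; apply/esym/majority_update => i.
rewrite -in_AToME /local_snap; case: (upd i) => ->; first by left.
by right; exact: error_flip.
Qed.

Lemma in_AToM_const t t' : a < t -> t <= t' -> t' < b -> h t = h t'.
Proof.
move=> lt_at le_tt' lt_t'b.
have [n] : exists n : nat, rounds_between f phi t t' < n%:Z.
  by exists (absz (rounds_between f phi t t')).+1; lia.
elim: n t lt_at le_tt' => [|n IHn] t lt_at le_tt' lt_rounds.
  by have := rounds_between_ge0 phi f_gt0 le_tt'; lia.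
have [u lt_tu [upd stable rounds_gt0]] := next_event phi f_gt0 m_gt0 t.
have [lt_t'u|le_ut'] := ltP t' u.
  apply: in_AToM_update; first by rewrite (lt_le_trans lt_at le_tt').
  by move=> i; left; apply: stable; rewrite le_tt'.
have -> : h t = h u.
  by apply: in_AToM_update => //; rewrite (lt_trans lt_at lt_tu) (le_lt_trans le_ut').
apply: IHn => //; first exact: lt_trans lt_at lt_tu.
by move: lt_rounds; rewrite (rounds_betweenD _ _ t u t'); lia.
Qed.

Lemma error_interval_le_kth_period : b - a <= kth_period f.
Proof.
rewrite leNgt; apply/negP => lt_F_ba.
set K := fun i => f i <= kth_period f.
have maj_K : majority K := majority_le_kth_period f m_gt0.
have [i0 K_i0] : exists i0, K i0.
  have /card_gt0P[i0] : (0 < #|[set i | K i]|)%N by move: maj_K; rewrite /majority; lia.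
  by rewrite inE; exists i0.
case: (arg_maxP (fun i => L i a + f i) K_i0) => j K_j j_max.
set T := L j a + f j.
have lt_Tb : T < b.
  by have := last_round_le (phi j) (f_gt0 j) a; rewrite /T /K in K_j *; lra.
have vote_K i : K i -> local_snap E phi f i T N P = ~~ h T.
  move=> K_i; have le_rT : L i a + f i <= L i T.
    by rewrite -last_round_next //; apply/le_last_round/j_max.
  have lt_a_LT : a < L i T.
    exact: lt_le_trans (lt_last_round_period (phi i) (f_gt0 i) a) le_rT.
  have le_LT_T : L i T <= T := last_round_le (phi i) (f_gt0 i) T.
  rewrite /local_snap error_flip ?lt_a_LT ?(le_lt_trans le_LT_T lt_Tb) //.
  by rewrite (in_AToM_const lt_a_LT le_LT_T lt_Tb).
by have := majority_agree maj_K vote_K; rewrite -in_AToME; case: (h T).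
Qed.

End ErrorInterval.

Definition transient_edge {R : realType} {V : Type} (F : R) : R -> rel V :=
  fun t _ _ => (0 < t) && (t < F).

Lemma transient_edge_error (R : realType) (V : Type) (m : nat) (f : 'I_m -> R)
    (N P : V) :
  (forall i, 0 < f i) -> forall t, 0 < t < kth_period f ->
  atom_error (transient_edge (kth_period f)) (fun=> 0) f t N P.
Proof.
move=> f_gt0 t t_in; have [t_gt0 lt_tF] := andP t_in.
rewrite /atom_error {2}/transient_edge t_in eqb_id in_AToME.
apply: contra (minority_lt_kth_period f); apply: majority_sub => i.
rewrite /local_snap /transient_edge => /andP[round_gt0 _].
rewrite ltNge; apply: contraL round_gt0 => le_F_fi.
by rewrite last_round_phase ?add0r ?ltxx ?(ltW t_gt0) ?(lt_le_trans lt_tF le_F_fi).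
Qed.

Theorem theorem3 (R : realType) (V : Type) (N : V) (m : nat)
    (f : 'I_m -> R) (hm : (0 < m)%N) (hf : forall i, 0 < f i) :
  (* no error on a connection of N can persist longer than f^{floor(m/2)+1} *)
  (forall (E : R -> rel V) (phi : 'I_m -> R) (P : V) (a b : R),
      (forall t, a < t < b -> atom_error E phi f t N P) ->
      b - a <= kth_period f) /\
  (* and this duration is attained *)
  (forall P : V, exists (E : R -> rel V) (phi : 'I_m -> R) (a b : R),
      b - a = kth_period f /\
      forall t, a < t < b -> atom_error E phi f t N P).
Proof.
split=> [E phi P a b error | P].
  exact: error_interval_le_kth_period hf hm error.
exists (transient_edge (kth_period f)), (fun=> 0), 0, (kth_period f).
by split; [rewrite subr0 | exact: transient_edge_error].
Qed.
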